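(* For all programs $P,P',S,Q$: if $P\sqsubseteq P'$ and the operational triple $\{|P'|\}\ S\ \{|Q|\}$ holds, then $\{|P|\}\ S\ \{|Q|\}$ holds.
   Context: Programs are statements of a sequential imperative language with a standard small-step operational semantics over program states. $\mathrm{behs}(P)$ is the set of pairs (initial state, final state) of finite terminating executions of $P$; $(s,u)\in\mathrm{behs}(P;Q)$ iff there is $t$ with $(s,t)\in\mathrm{behs}(P)$ and $(t,u)\in\mathrm{behs}(Q)$. The post-state set is $\mathrm{pst}(P)=\{t:\exists s,\ (s,t)\in\mathrm{behs}(P)\}$. Program ordering: $P\sqsubseteq Q$ iff $\mathrm{pst}(P)\subseteq\mathrm{pst}(Q)$. The operational triple $\{|P|\}\ S\ \{|Q|\}$ is defined to mean $\mathrm{pst}(P;S)\subseteq\mathrm{pst}(Q)$. *)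

From Stdlib Require Import ZArith Relations.

Definition var := nat.
Definition state := var -> Z.

Inductive aexp : Type :=
| ANum : Z -> aexp
| AVar : var -> aexp
| APlus : aexp -> aexp -> aexp
| AMinus : aexp -> aexp -> aexp
| AMult : aexp -> aexp -> aexp.

Inductive bexp : Type :=
| BTrue : bexp
| BFalse : bexp
| BEq : aexp -> aexp -> bexp
| BLe : aexp -> aexp -> bexp
| BNot : bexp -> bexp
| BAnd : bexp -> bexp -> bexp.

Fixpoint aeval (s : state) (a : aexp) : Z :=
  match a with
  | ANum n => n
  | AVar x => s x
  | APlus a1 a2 => (aeval s a1 + aeval s a2)%Z
  | AMinus a1 a2 => (aeval s a1 - aeval s a2)%Z
  | AMult a1 a2 => (aeval s a1 * aeval s a2)%Z
  end.

Fixpoint beval (s : state) (b : bexp) : bool :=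
  match b with
  | BTrue => true
  | BFalse => false
  | BEq a1 a2 => Z.eqb (aeval s a1) (aeval s a2)
  | BLe a1 a2 => Z.leb (aeval s a1) (aeval s a2)
  | BNot b1 => negb (beval s b1)
  | BAnd b1 b2 => andb (beval s b1) (beval s b2)
  end.

Inductive stmt : Type :=
| Skip : stmt
| Assign : var -> aexp -> stmt
| Seq : stmt -> stmt -> stmt
| If : bexp -> stmt -> stmt -> stmt
| While : bexp -> stmt -> stmt.

Definition update (s : state) (x : var) (v : Z) : state :=
  fun y => if Nat.eqb x y then v else s y.

Inductive step : stmt * state -> stmt * state -> Prop :=
| S_Assign : forall x a s, step (Assign x a, s) (Skip, update s x (aeval s a))
| S_SeqSkip : forall c s, step (Seq Skip c, s) (c, s)
| S_Seq : forall c1 c1' c2 s s', step (c1, s) (c1', s') ->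
    step (Seq c1 c2, s) (Seq c1' c2, s')
| S_IfTrue : forall b c1 c2 s, beval s b = true -> step (If b c1 c2, s) (c1, s)
| S_IfFalse : forall b c1 c2 s, beval s b = false -> step (If b c1 c2, s) (c2, s)
| S_While : forall b c s,
    step (While b c, s) (If b (Seq c (While b c)) Skip, s).

Definition steps := clos_refl_trans (stmt * state) step.

Definition behs (P : stmt) (s t : state) : Prop := steps (P, s) (Skip, t).

Definition pst (P : stmt) (t : state) : Prop := exists s, behs P s t.

Definition prog_le (P Q : stmt) : Prop := forall t, pst P t -> pst Q t.

Definition op_triple (P S Q : stmt) : Prop := forall t, pst (Seq P S) t -> pst Q t.

(* A terminating run of [P; S] is a run of [P] to some intermediate state [t]
   followed by a run of [S] from [t].  Hence the post-states of [P; S] depend on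
   [P] only through [pst P], so sequencing is monotone for the program ordering,
   and the triple, being the inclusion [pst (P; S) ⊆ pst Q], is inherited
   along that ordering by transitivity of inclusion. *)
From Stdlib Require Import Relations.

Lemma steps_seq_congr (c1 c1' c2 : stmt) (s s' : state) :
  steps (c1, s) (c1', s') -> steps (Seq c1 c2, s) (Seq c1' c2, s').
Proof.
  intros H.
  change (steps (Seq (fst (c1, s)) c2, snd (c1, s))
                (Seq (fst (c1', s')) c2, snd (c1', s'))).
  induction H as [[a u] [b v] Hstep | x | x y z _ IHxy _ IHyz].
  - apply rt_step; simpl; constructor; exact Hstep.
  - apply rt_refl.
  - eapply rt_trans; [exact IHxy | exact IHyz].
Qed.

Lemma behs_seq_intro (P S : stmt) (s t u : state) :
  behs P s t -> behs S t u -> behs (Seq P S) s u.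
Proof.
  intros HP HS.
  eapply rt_trans; [exact (steps_seq_congr P Skip S s t HP) |].
  eapply rt_trans; [apply rt_step; constructor | exact HS].
Qed.

Lemma behs_seq_elim (P S : stmt) (s u : state) :
  behs (Seq P S) s u -> exists t, behs P s t /\ behs S t u.
Proof.
  intros H; apply clos_rt_rt1n in H.
  remember (Seq P S, s) as x eqn:Ex; remember (Skip, u) as y eqn:Ey.
  revert P s Ex.
  induction H as [x | x x' y Hstep Hrest IH]; intros P s Ex; subst.
  - discriminate.
  - inversion Hstep; subst.
    + exists s; split; [apply rt_refl | exact (clos_rt1n_rt _ _ _ _ Hrest)].
    + destruct (IH eq_refl _ _ eq_refl) as [t [HP HS]].
      exists t; split; [eapply rt_trans; [apply rt_step; eassumption | exact HP] | exact HS].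
Qed.

Lemma pst_seq (P S : stmt) (u : state) :
  pst (Seq P S) u <-> exists t, pst P t /\ behs S t u.
Proof.
  split.
  - intros [s Hs]; destruct (behs_seq_elim P S s u Hs) as [t [HP HS]].
    exists t; split; [exists s |]; assumption.
  - intros [t [[s HP] HS]]; exists s; exact (behs_seq_intro P S s t u HP HS).
Qed.

Lemma prog_le_seql (P P' S : stmt) :
  prog_le P P' -> prog_le (Seq P S) (Seq P' S).
Proof.
  intros Hle u Hu; apply pst_seq in Hu; apply pst_seq.
  destruct Hu as [t [Ht HS]]; exists t; split; [apply Hle |]; assumption.
Qed.

Theorem proposition6 : forall P P' S Q : stmt,
  prog_le P P' -> op_triple P' S Q -> op_triple P S Q.
Proof.
  intros P P' S Q Hle Htriple u Hu.
  apply Htriple, (prog_le_seql P P' S Hle), Hu.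
Qed.
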